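(* Let $k\ge 3$ and let $D$ be a digraph on $n$ vertices with $\delta^0(D)\ge\lceil (n+k)/2\rceil-1$. Let $S=(s_1,\dots,s_k)$ be a sequence of distinct vertices of $D$, let $C$ be a longest $S$-cycle in $D$, suppose $C$ is not Hamiltonian, and let $H$ be the subdigraph of $D$ induced by $V(D)\setminus V(C)$. Let $F$ be the set of vertices of $C$ which receive an edge from some vertex of $H$, and $T$ the set of vertices of $C$ which send an edge to some vertex of $H$. Suppose $H$ contains a vertex $v$ with $d^-_H(v)+d^+_H(v)\le |H|+k-1$, and suppose $x_1,x_2\in T$ and $y_1,y_2\in F$ are distinct vertices on $C$. Then $x_1v, vy_1\in E(D)$ or $x_2v, vy_2\in E(D)$ (or both).
   Context: Digraphs have no loops and at most one edge in each direction between any two vertices; paths and cycles are directed. $\delta^0(D)=\min\{\delta^+(D),\delta^-(D)\}$. An $S$-cycle is a directed cycle in $D$ encountering $s_1,\dots,s_k$ in this order. $d^\pm_H(v)$ denotes the out/indegree of $v$ within $H$. *)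

(* A digraph is an irreflexive relation e on a finType V
   (at most one edge in each direction is automatic for a relation). *)
From mathcomp Require Import all_boot.
Set Implicit Arguments. Unset Strict Implicit. Unset Printing Implicit Defensive.

Section Digraph.
Variable V : finType.
Variable e : rel V.

Definition outdeg (v : V) : nat := #|[set w | e v w]|.
Definition indeg (v : V) : nat := #|[set w | e w v]|.
Definition min_semideg_ge (d : nat) : Prop :=
  forall v : V, d <= outdeg v /\ d <= indeg v.

Definition is_dcycle (c : seq V) : Prop :=
  [/\ uniq c, 2 <= size c & cycle e c].

(* S-cycle: a directed cycle encountering s_1,...,s_k in this (cyclic) order *)
Definition is_S_cycle (S c : seq V) : Prop :=
  is_dcycle c /\ exists i : nat, subseq S (rot i c).

Definition longest_S_cycle (S c : seq V) : Prop :=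
  is_S_cycle S c /\ forall c', is_S_cycle S c' -> size c' <= size c.

Definition Fset (c : seq V) : {set V} :=
  [set y | (y \in c) && [exists h, (h \notin c) && e h y]].
Definition Tset (c : seq V) : {set V} :=
  [set x | (x \in c) && [exists h, (h \notin c) && e x h]].

Definition outdeg_H (c : seq V) (v : V) : nat := #|[set w | (w \notin c) && e v w]|.
Definition indeg_H (c : seq V) (v : V) : nat := #|[set w | (w \notin c) && e w v]|.
End Digraph.

(* Splicing a path of H = D - V(C) between a vertex x of C and its successor x^+
   would yield a longer S-cycle, so a longest S-cycle admits no such detour.
   Hence the in-neighbours of a vertex h of H on C and the predecessors of the
   out-neighbours on C of any h' reachable from h in H are disjoint, giving
   d^-_C(h) + d^+_C(h') <= |C|.  With the semidegree bound this forces H to be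
   strongly connected (otherwise a splitting of H into an initial and a final
   part gives 2 delta^0 <= n - 2), so no x in T has x^+ in F.  For v, the same
   count shows that at most one vertex z of C has neither z v nor v z^+; if both
   alternatives fail, x_i or the predecessor of y_i is that vertex for i = 1, 2,
   and each identification contradicts x_1 <> x_2, y_1 <> y_2 or x^+ \notin F. *)

From mathcomp Require Import all_boot zify.
Set Implicit Arguments. Unset Strict Implicit. Unset Printing Implicit Defensive.

Section Splice.
Variables (V : finType) (e : rel V).

Lemma cycle_splice x y r P :
  cycle e (x :: y :: r) -> path e x P -> e (last x P) y ->
  cycle e (x :: P ++ y :: r).
Proof.
rewrite /cycle /= rcons_cat cat_path => /andP [_ pyr] -> /= ->.
by rewrite pyr.
Qed.

Lemma uniq_splice (A : pred V) x y r P :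
  uniq (x :: y :: r) -> uniq P -> all A (x :: y :: r) -> all (predC A) P ->
  uniq (x :: P ++ y :: r).
Proof.
move=> uxyr uP /allP inA /allP outA.
rewrite -cat1s uniq_catCA cat_uniq uP cat1s uxyr andbT.
apply/hasPn => z /inA Az; apply/negP => /outA.
by rewrite /= Az.
Qed.

End Splice.

Section LongestSCycle.
Variables (V : finType) (e : rel V) (S C : seq V).
Hypothesis longestC : longest_S_cycle e S C.

Lemma longest_uniq : uniq C.
Proof. by case: longestC => [[[]]]. Qed.

Lemma longest_no_detour_path x P :
  x \in C -> P != [::] -> uniq P -> all (fun z => z \notin C) P ->
  path e x P -> ~~ e (last x P) (next C x).
Proof.
move=> xC nzP uP outP pP; apply/negP => lastP.
case: longestC => [[[uC szC cC] [i subS]] longest].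
have [l1 [l2 Ei]] : exists l1 l2, rot i C = l1 ++ x :: l2.
  by case/splitPr: (etrans (mem_rot i C x) xC) => l1 l2; exists l1, l2.
have rotC : rot (size l1) (rot i C) = x :: l2 ++ l1 by rewrite Ei rot_size_cat.
have sizeC : size (x :: l2 ++ l1) = size C by rewrite -rotC !size_rot.
case Er: (l2 ++ l1) rotC sizeC => [|y r] rotC sizeC.
  by move: szC; rewrite -sizeC.
have nextx : next C x = y.
  have uCi : uniq (rot i C) by rewrite rot_uniq.
  by rewrite -(next_rot i uC) -(next_rot (size l1) uCi) rotC /= eqxx.
set N := l1 ++ x :: P ++ l2.
have rotN : rot (size l1) N = x :: P ++ y :: r.
  by rewrite /N rot_size_cat /= -catA Er.
have sizeN : size N = size C + size P.
  by rewrite -sizeC -Er /N !size_cat /= !size_cat; lia.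
have sizeP : 0 < size P by rewrite lt0n size_eq0.
have NS : is_S_cycle e S N.
  split; last first.
    exists 0; rewrite rot0 /N; move: subS; rewrite Ei => /subseq_trans; apply.
    by apply: cat_subseq => //=; rewrite eqxx suffix_subseq.
  split.
  - rewrite -(rot_uniq (size l1)) rotN.
    apply: uniq_splice (mem C) _ _ _ _ _ uP _ _.
    + by rewrite -rotC !rot_uniq.
    + by apply/allP => z; rewrite -rotC !mem_rot.
    + by apply/allP => z /(allP outP).
  - by rewrite sizeN; lia.
  - rewrite -(rot_cycle (size l1)) rotN; apply: cycle_splice => //.
      by rewrite -rotC !rot_cycle.
    by rewrite -nextx.
by have := longest _ NS; rewrite sizeN; lia.
Qed.

Definition e_H : rel V := [rel a b | [&& e a b, a \notin C & b \notin C]].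

Lemma path_e_H_outside a p : path e_H a p -> all (fun z => z \notin C) p.
Proof.
elim: p a => //= b p IHp a /andP [/and3P [_ _ bC] pb].
by rewrite bC (IHp b pb).
Qed.

Lemma connect_e_H_outside a b : a \notin C -> connect e_H a b -> b \notin C.
Proof.
move=> aC /connectP [p pp ->]; have := mem_last a p.
rewrite inE => /predU1P [-> // | /(allP (path_e_H_outside pp))] //.
Qed.

Lemma longest_no_detour x a b :
  x \in C -> a \notin C -> e x a -> connect e_H a b -> ~~ e b (next C x).
Proof.
move=> xC aC xa /connectP [p pp ->]; case: (shortenP pp) => q pq uq _.
apply: (longest_no_detour_path (P := a :: q)) => //=.
- by rewrite aC (path_e_H_outside pq).
- by rewrite xa (sub_path _ pq) // => u w /and3P [].
Qed.

Definition in_C x : {set V} := [set z in C | e z x].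
Definition out_C y : {set V} := [set z in C | e y z].
Definition prev_out_C y : {set V} := [set z in C | e y (next C z)].
Definition missing_C x y : {set V} := [set z in C] :\: (in_C x :|: prev_out_C y).

Lemma card_prev_out_C y : #|prev_out_C y| = #|out_C y|.
Proof.
have -> : prev_out_C y = next C @^-1: out_C y.
  by apply/setP => z; rewrite !inE mem_next.
exact/card_preimset/(can_inj (prev_next longest_uniq)).
Qed.

Lemma in_missing_C x y z :
  (z \in missing_C x y) = [&& z \in C, ~~ e z x & ~~ e y (next C z)].
Proof. by rewrite /missing_C !inE andbC; case: (z \in C); rewrite //= negb_or. Qed.

Lemma card_in_out_missing_C x y : x \notin C -> connect e_H x y ->
  #|in_C x| + #|out_C y| + #|missing_C x y| = size C.
Proof.
move=> xC xy; have disj : in_C x :&: prev_out_C y = set0.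
  apply/setP => z; rewrite !inE; apply/negbTE/negP => /andP [/andP [zC zx]].
  by rewrite (negPf (longest_no_detour zC xC zx xy)) andbF.
have sub : in_C x :|: prev_out_C y \subset [set z in C].
  by apply/subsetP => z; rewrite !inE => /orP [] /andP [].
have cardC : #|[set z in C]| = size C by rewrite cardsE; apply/card_uniqP/longest_uniq.
rewrite -card_prev_out_C -cardC -(cardsID (in_C x :|: prev_out_C y) [set z in C]).
by rewrite (setIidPr sub) cardsU disj cards0 subn0.
Qed.


Lemma indeg_split z : indeg e z = #|in_C z| + indeg_H e C z.
Proof.
rewrite /indeg -(cardsID [set w in C]).
by congr (_ + _); apply: eq_card => w; rewrite !inE andbC.
Qed.

Lemma outdeg_split z : outdeg e z = #|out_C z| + outdeg_H e C z.
Proof.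
rewrite /outdeg -(cardsID [set w in C]).
by congr (_ + _); apply: eq_card => w; rewrite !inE andbC.
Qed.

Lemma indeg_outdeg_le x y : x \notin C -> connect e_H x y ->
  indeg e x + outdeg e y <= size C + indeg_H e C x + outdeg_H e C y.
Proof.
move=> xC xy; rewrite indeg_split outdeg_split.
by have := card_in_out_missing_C xC xy; lia.
Qed.

Lemma longest_size_le : size C <= #|V|.
Proof. by rewrite -(card_uniqP longest_uniq) max_card. Qed.

Lemma card_outside : #|[set z | z \notin C]| = #|V| - size C.
Proof.
have := cardsC [set z in C]; rewrite cardsE (card_uniqP longest_uniq) => <-.
by rewrite addKn; apply: eq_card => z; rewrite !inE.
Qed.

Hypothesis e_irr : irreflexive e.

Lemma outdeg_H_le_closed (A : {set V}) a : a \in A ->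
  (forall z, z \notin C -> e a z -> z \in A) -> outdeg_H e C a <= #|A| - 1.
Proof.
move=> aA closedA; rewrite [#|A|](cardsD1 a) aA add1n subn1 /=.
apply/subset_leq_card/subsetP => z; rewrite !inE => /andP [zC az].
by rewrite closedA // andbT; apply: contraTneq az => ->; rewrite e_irr.
Qed.

Lemma indeg_H_le_closed (A : {set V}) a : a \in A ->
  (forall z, z \notin C -> e z a -> z \in A) -> indeg_H e C a <= #|A| - 1.
Proof.
move=> aA closedA; rewrite [#|A|](cardsD1 a) aA add1n subn1 /=.
apply/subset_leq_card/subsetP => z; rewrite !inE => /andP [zC za].
by rewrite closedA // andbT; apply: contraTneq za => ->; rewrite e_irr.
Qed.

Hypothesis semideg : min_semideg_ge e (uphalf (#|V| + size S) - 1).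

Lemma semideg_sum_ge x y : #|V| + size S <= indeg e x + outdeg e y + 2.
Proof.
have := leq_uphalf_double (#|V| + size S) (uphalf (#|V| + size S)).
by rewrite leqnn; have [_ ?] := semideg x; have [? _] := semideg y; lia.
Qed.

Hypothesis S_nonempty : 0 < size S.

Lemma card_missing_C_le1 v : v \notin C ->
  indeg_H e C v + outdeg_H e C v <= (#|V| - size C) + size S - 1 ->
  #|missing_C v v| <= 1.
Proof.
move=> vC; have := card_in_out_missing_C vC (connect0 _ v).
have := semideg_sum_ge v v; have := longest_size_le.
by rewrite indeg_split outdeg_split; lia.
Qed.

Lemma outside_strongly_connected u w :
  u \notin C -> w \notin C -> connect e_H u w.
Proof.
move=> uC wC; apply/idPn => nuw.
pose A := [set z | connect e_H u z].
pose B := [set z | (z \notin C) && (z \notin A)].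
have A_outside z : z \in A -> z \notin C by rewrite inE; apply: connect_e_H_outside.
have e_H_in z a : z \notin C -> a \notin C -> e z a -> connect e_H z a.
  by move=> zC aC za; apply: connect1; rewrite /e_H /= za zC aC.
have cardAB : #|A| + #|B| = #|V| - size C.
  rewrite -card_outside -(cardsID A [set z | z \notin C]); congr (_ + _); apply: eq_card => z.
    by rewrite !inE andb_idl // => uz; apply: A_outside; rewrite inE.
  by rewrite !inE andbC.
have uA : u \in A by rewrite inE connect0.
have wB : w \in B by rewrite !inE wC.
have A_out_closed a : a \in A -> forall z, z \notin C -> e a z -> z \in A.
  move=> aA z zC az; rewrite inE (connect_trans _ (e_H_in a z (A_outside a aA) zC az)) //.
  by rewrite inE in aA.
have B_in_closed b : b \in B -> forall z, z \notin C -> e z b -> z \in B.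
  rewrite !inE => /andP [bC bA] z zC zb; rewrite !inE zC; apply: contra bA => zA.
  by rewrite (connect_trans zA (e_H_in z b zC bC zb)).
have [A0 B0] : 0 < #|A| /\ 0 < #|B| by split; apply/card_gt0P; [exists u | exists w].
have := longest_size_le.
case: (boolP [exists b in B, exists a in A, e b a]).
  case/exists_inP => b bB /exists_inP [a aA ba].
  have bC : b \notin C by move: bB; rewrite inE => /andP [].
  have := indeg_outdeg_le bC (e_H_in b a bC (A_outside a aA) ba).
  have := outdeg_H_le_closed aA (A_out_closed a aA).
  have := indeg_H_le_closed bB (B_in_closed b bB).
  by have := semideg_sum_ge b a; lia.
move/exists_inPn => noBA.
have inB z : (z \in B) = (z \notin C) && (z \notin A) by rewrite inE.
have A_in_closed z : z \notin C -> e z u -> z \in A.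
  move=> zC zu; apply/idPn => zA; have zB : z \in B by rewrite inB zC.
  by move/negP: (noBA z zB); apply; apply/exists_inP; exists u.
have B_out_closed z : z \notin C -> e w z -> z \in B.
  move=> zC wz; rewrite inB zC; apply/negP => zA.
  by move/negP: (noBA w wB); apply; apply/exists_inP; exists z.
have := indeg_outdeg_le uC (connect0 _ u); have := indeg_outdeg_le wC (connect0 _ w).
have := indeg_H_le_closed uA A_in_closed; have := outdeg_H_le_closed uA (A_out_closed u uA).
have := indeg_H_le_closed wB (B_in_closed w wB); have := outdeg_H_le_closed wB B_out_closed.
by have := semideg_sum_ge u u; have := semideg_sum_ge w w; lia.
Qed.

Lemma next_Tset_notin_Fset x : x \in Tset e C -> next C x \notin Fset e C.
Proof.
rewrite !inE => /andP [xC /exists_inP [a aC xa]]; rewrite mem_next xC /=.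
apply/exists_inP => -[b bC bn].
by have /negP := longest_no_detour xC aC xa (outside_strongly_connected aC bC).
Qed.

Lemma missing_C_witness v x y : v \notin C ->
  x \in Tset e C -> y \in Fset e C -> ~~ (e x v && e v y) ->
  exists2 m, m \in missing_C v v & m = x \/ next C m = y.
Proof.
move=> vC xT yF; rewrite negb_and => /orP [xv | vy].
  exists x; last by left.
  have xC : x \in C by move: xT; rewrite inE => /andP [].
  rewrite in_missing_C xC xv; apply/negP => vn.
  move/negP: (next_Tset_notin_Fset xT); apply.
  by rewrite inE mem_next xC; apply/existsP; exists v; rewrite vC.
have yC : y \in C by move: yF; rewrite inE => /andP [].
exists (prev C y); last by right; rewrite next_prev ?longest_uniq.
rewrite in_missing_C mem_prev yC next_prev ?longest_uniq // vy andbT /=.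
apply/negP => pv; have pyT : prev C y \in Tset e C.
  by rewrite inE mem_prev yC; apply/existsP; exists v; rewrite vC.
by move/negP: (next_Tset_notin_Fset pyT); rewrite next_prev ?longest_uniq.
Qed.

End LongestSCycle.

Theorem lemma10 (V : finType) (e : rel V) (S C : seq V) (v x1 x2 y1 y2 : V) :
  irreflexive e ->
  3 <= size S ->
  uniq S ->
  min_semideg_ge e (uphalf (#|V| + size S) - 1) ->
  longest_S_cycle e S C ->
  size C < #|V| ->
  v \notin C ->
  indeg_H e C v + outdeg_H e C v <= (#|V| - size C) + size S - 1 ->
  x1 \in Tset e C -> x2 \in Tset e C -> y1 \in Fset e C -> y2 \in Fset e C ->
  uniq [:: x1; x2; y1; y2] ->
  (e x1 v && e v y1) \/ (e x2 v && e v y2).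
Proof.
move=> irr S3 _ semideg longestC _ vC degH x1T x2T y1F y2F uniq4.
have S0 : 0 < size S by apply: leq_trans S3.
have missing_le1 := card_missing_C_le1 longestC semideg S0 vC degH.
have witness := missing_C_witness longestC irr semideg S0 vC.
have T_F := next_Tset_notin_Fset longestC irr semideg S0.
case: (boolP (e x1 v && e v y1)) => [|fail1]; first by left.
case: (boolP (e x2 v && e v y2)) => [|fail2]; first by right.
have [m1 m1M m1E] := witness _ _ x1T y1F fail1.
have [m2 m2M m2E] := witness _ _ x2T y2F fail2.
have m21 : m2 = m1 := card_le1_eqP missing_le1 m1 m2 m1M m2M.
move: uniq4; rewrite /= !inE !negb_or => /and4P [/and3P [x12 _ _] _ y12 _].
subst m2; case: m1E m2E => [m1E [m2E|m2E] | m1E [m2E|m2E]].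
- by move: x12; rewrite -m1E -m2E eqxx.
- by move: (T_F _ x1T); rewrite -m1E m2E y2F.
- by move: (T_F _ x2T); rewrite -m2E m1E y1F.
- by move: y12; rewrite -m1E -m2E eqxx.
Qed.
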